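(* For all integers $n \ge 1$ and $1 \le k \le n$, consideration probabilities are not identifiable in the Plackett--Luce with consideration (PL+C) model on the universe $\mathcal U=\{1,\dots,n\}$ with rankings of length $k$: there exist utilities $u_1,\dots,u_n$ and two distinct vectors of consideration probabilities $(p_1,\dots,p_n)\neq(p_1',\dots,p_n')$ with all entries in $(0,1]$ such that, with the utilities held fixed, both vectors induce exactly the same probability distribution over length-$k$ rankings.
   Context: PL+C model: universe $\mathcal U=\{1,\dots,n\}$, fixed ranking length $k\le n$. Each item $i$ has a utility $u_i$ and a consideration probability $p_i\in(0,1]$. A consideration set $C\subseteq\mathcal U$ is drawn by including each item $i$ independently with probability $p_i$, conditioned on $|C|\ge k$; i.e. for $|C|\ge k$, $\Pr_C(C)=\frac{1}{z_{k,p}}\prod_{i\in C}p_i\prod_{j\notin C}(1-p_j)$ with $z_{k,p}=\sum_{C:|C|\ge k}\prod_{i\in C}p_i\prod_{j\notin C}(1-p_j)$, and $\Pr_C(C)=0$ if $|C|<k$. Given $C$, a ranking $r=(r_1,\dots,r_k)$ of distinct items is produced by Plackett--Luce: $\Pr_{PL}(r\mid C)=\prod_{t=1}^k \frac{\exp(u_{r_t})}{\sum_{j\in C\setminus\{r_1,\dots,r_{t-1}\}}\exp(u_j)}$ if $\{r_1,\dots,r_k\}\subseteq C$, and $0$ otherwise. The PL+C probability of $r$ is $\Pr_{PLC}(r)=\sum_{C\subseteq\mathcal U}\Pr_C(C)\Pr_{PL}(r\mid C)$. *)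

From HB Require Import structures.
From mathcomp Require Import all_boot all_order all_algebra.
From mathcomp Require Import reals sequences exp.
Set Implicit Arguments. Unset Strict Implicit. Unset Printing Implicit Defensive.
Import Order.TTheory GRing.Theory Num.Theory.
Local Open Scope ring_scope.

Section PLC.
Variables (R : realType) (n k : nat).
Implicit Types (u p : {ffun 'I_n -> R}) (C : {set 'I_n}) (r : k.-tuple 'I_n).

Definition cweight p C : R :=
  (\prod_(i in C) p i) * (\prod_(j in ~: C) (1 - p j)).

Definition zkp p : R := \sum_(C : {set 'I_n} | (k <= #|C|)%N) cweight p C.

Definition PrC p C : R := if (k <= #|C|)%N then cweight p C / zkp p else 0.

Definition PrPL u C r : R :=
  if all (fun x => x \in C) r then
    \prod_(t < k)
      (expR (u (tnth r t)) /
       \sum_(j in C | j \notin take t r) expR (u j))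
  else 0.

Definition PrPLC u p r : R := \sum_(C : {set 'I_n}) PrC p C * PrPL u C r.

End PLC.

From HB Require Import structures.
From mathcomp Require Import all_boot all_order all_algebra.
From mathcomp Require Import reals sequences exp.
Set Implicit Arguments.
Unset Strict Implicit.
Unset Printing Implicit Defensive.

Import Order.TTheory GRing.Theory Num.Theory.
Local Open Scope ring_scope.

(* With all utilities equal, Plackett--Luce on a consideration set C is uniform
   over the orderings of C, so a ranking with support S has probability
   1 / #|C| ^_ k given any C containing S.  With all consideration probabilities
   equal to q, Pr_C(C) depends only on #|C|, and summing over the supersets of S
   size by size gives probability 1 / n ^_ k to every ranking, whatever
   q in (0, 1].  So q = 1 and q = 1/2 cannot be told apart. *)

Lemma ffactD n k j : (n ^_ (k + j) = n ^_ k * (n - k) ^_ j)%N.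
Proof.
elim: j => [|j IHj]; first by rewrite addn0 ffactn0 muln1.
by rewrite addnS !ffactnSr IHj subnDA mulnA.
Qed.

Lemma bin_sub_ffact n m k : (k <= m)%N ->
  ('C(n - k, m - k) * n ^_ k = 'C(n, m) * m ^_ k)%N.
Proof.
move=> le_km; apply/eqP; rewrite -(eqn_pmul2r (fact_gt0 (m - k))).
rewrite mulnAC bin_ffact mulnC -ffactD subnKC //.
by rewrite -mulnA ffact_fact // bin_ffact.
Qed.

Lemma sum_subset_card (V : nmodType) (T : finType) (A : {set T}) (P : pred nat)
    (F : nat -> V) :
  \sum_(D : {set T} | (D \subset A) && P #|D|) F #|D| =
  \sum_(m < #|A|.+1 | P m) F m *+ 'C(#|A|, m).
Proof.
have cardK (D : {set T}) : D \subset A -> (inord #|D| : 'I_#|A|.+1) = #|D| :> nat.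
  by move=> sDA; rewrite inordK // ltnS subset_leq_card.
rewrite (partition_big (fun D : {set T} => inord #|D| : 'I_#|A|.+1) P) => [|D /andP[/cardK->//]].
apply: eq_bigr => m Pm; rewrite -cards_draws -sumr_const.
apply: eq_big => [D | D /andP[/andP[sDA _] /eqP <-]]; last by rewrite cardK.
rewrite inE -andbA; apply: andb_id2l => /cardK cardDK.
by rewrite -val_eqE /= cardDK; apply/andb_idl => /eqP->.
Qed.

Lemma sum_supset_card (V : nmodType) (T : finType) (S : {set T}) (F : nat -> V) :
  \sum_(C : {set T} | S \subset C) F #|C| =
  \sum_(j < #|~: S|.+1) F (#|S| + j)%N *+ 'C(#|~: S|, j).
Proof.
rewrite -(sum_subset_card _ (fun=> true) (fun j => F (#|S| + j)%N)).
rewrite (reindex_onto (fun D => S :|: D) (fun C => C :\: S)) /=; last first.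
  by move=> C sSC; rewrite setDE setUIr setUCr setIT; exact/setUidPr.
have supsetE D : (S \subset S :|: D) && ((S :|: D) :\: S == D) = (D \subset ~: S) && true.
  by rewrite andbT subsetUl setDUl setDv set0U -disjoints_subset; apply/eqP/setDidPl.
apply: eq_big => [D | D]; first exact: supsetE.
rewrite supsetE andbT => sDS.
by rewrite cardsU disjoint_setI0 ?cards0 ?subn0 // disjoint_sym disjoints_subset.
Qed.

Lemma sum_card_geq (V : nmodType) (T : finType) k (F : nat -> V) :
  (k <= #|T|)%N ->
  \sum_(C : {set T} | (k <= #|C|)%N) F #|C| =
  \sum_(j < (#|T| - k).+1) F (k + j)%N *+ 'C(#|T|, k + j).
Proof.
move=> le_kT.
transitivity (\sum_(C : {set T} | (C \subset setT) && (k <= #|C|)%N) F #|C|).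
  by apply: eq_bigl => C; rewrite subsetT.
rewrite sum_subset_card cardsT -(big_mkord (leq k) (fun m => F m *+ 'C(#|T|, m))).
rewrite (big_cat_nat (leq0n k)) /=; last exact: leqW.
rewrite big_nat_cond big_pred0 => [|m]; last by case: ltnP; rewrite andbF.
rewrite add0r -{1}[k]add0n big_addn big_mkord subSn //.
by apply: eq_big => [j | j _]; rewrite ?leq_addl // addnC.
Qed.

(* S has 'C(#|T| - k, m - k) supersets of size m, and
   'C(#|T| - k, m - k) / m ^_ k = 'C(#|T|, m) / #|T| ^_ k. *)
Lemma sum_supset_div_ffact (R : numFieldType) (T : finType) (S : {set T}) k
    (F : nat -> R) :
  #|S| = k ->
  \sum_(C : {set T} | S \subset C) F #|C| / (#|C| ^_ k)%:R =
  (\sum_(C : {set T} | (k <= #|C|)%N) F #|C|) / (#|T| ^_ k)%:R.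
Proof.
move=> cardS; have le_kT : (k <= #|T|)%N by rewrite -cardS max_card.
have cardCS : #|~: S| = (#|T| - k)%N by rewrite -(cardsC S) cardS addKn.
rewrite (sum_supset_card S (fun m => F m / (m ^_ k)%:R)) (sum_card_geq _ le_kT).
rewrite cardS cardCS mulr_suml; apply: eq_bigr => j _.
have ffact_neq0 m : (k <= m)%N -> (m ^_ k)%:R != 0 :> R.
  by rewrite pnatr_eq0 -lt0n ffact_gt0.
rewrite mulrnAl -!mulrnAr; congr (F _ * _).
rewrite -mulr_natl -[in RHS]mulr_natl; apply/eqP.
rewrite eqr_div ?ffact_neq0 ?leq_addr // -!natrM eqr_nat.
by have := bin_sub_ffact #|T| (leq_addr j k); rewrite addKn => ->.
Qed.

Section UniformPLC.
Variables (R : realType) (n : nat).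
Implicit Types (p : {ffun 'I_n -> R}) (C : {set 'I_n}).

Lemma cweight_ge0 p C : (forall i, 0 <= p i <= 1) -> 0 <= cweight p C.
Proof.
move=> p01; apply: mulr_ge0; apply: prodr_ge0 => i _.
  by case/andP: (p01 i).
by case/andP: (p01 i) => _; rewrite subr_ge0.
Qed.

Lemma zkp_gt0 k p : (k <= n)%N -> (forall i, 0 < p i <= 1) -> 0 < zkp k p.
Proof.
move=> le_kn p01; rewrite /zkp (bigD1 setT) ?cardsT ?card_ord //=.
apply: ltr_wpDr.
  apply: sumr_ge0 => C _; apply: cweight_ge0 => i.
  by have /andP[/ltW-> ->] := p01 i.
rewrite /cweight setCT big_set0 mulr1.
by apply: prodr_gt0 => i _; have /andP[] := p01 i.
Qed.

Lemma cweight_cst (q : R) C :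
  cweight [ffun=> q] C = q ^+ #|C| * (1 - q) ^+ (n - #|C|).
Proof.
have cardC : #|~: C| = (n - #|C|)%N by rewrite -(addKn #|C| #|~: C|) cardsC card_ord.
rewrite /cweight; under eq_bigr do rewrite ffunE.
by under [in X in _ * X]eq_bigr do rewrite ffunE; rewrite !prodr_const cardC.
Qed.

Lemma PrPL_cst k (c : R) C (r : k.-tuple 'I_n) : uniq r ->
  PrPL [ffun=> c] C r =
  if [set x in r] \subset C then (#|C| ^_ k)%:R^-1 else 0.
Proof.
move=> ur; rewrite /PrPL.
have -> : all (fun x => x \in C) r = ([set x in r] \subset C).
  by apply/allP/subsetP => sub x; [rewrite inE => /sub | move=> xr; apply: sub; rewrite inE].
case: ifP => // sub; rewrite ffact_prod natr_prod -prodfV; apply: eq_bigr => t _.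
have sub_t : [set x in take t r] \subset C.
  by apply: subset_trans sub; apply/subsetP => x; rewrite !inE; apply: mem_take.
have card_t : #|[set x in take t r]| = t.
  rewrite cardsE; move/card_uniqP: (take_uniq t ur) ->.
  by rewrite size_take size_tuple ltn_ord.
under eq_bigr do rewrite ffunE.
rewrite ffunE (eq_bigl (mem (C :\: [set x in take t r]))) => [|j]; last first.
  by rewrite !inE andbC.
rewrite sumr_const cardsDS // card_t -(mulr_natr (expR c)) invfM mulrA.
by rewrite divff ?mul1r // gt_eqF ?expR_gt0.
Qed.

Lemma PrPLC_cst k (c q : R) (r : k.-tuple 'I_n) :
  (k <= n)%N -> 0 < q <= 1 -> uniq r ->
  PrPLC [ffun=> c] [ffun=> q] r = (n ^_ k)%:R^-1.
Proof.
move=> le_kn q01 ur; rewrite /PrPLC /PrC; set z := zkp k _.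
pose w m := q ^+ m * (1 - q) ^+ (n - m).
have cardS : #|[set x in r]| = k.
  by rewrite cardsE; move/card_uniqP: ur ->; rewrite size_tuple.
have zE : z = \sum_(C : {set 'I_n} | (k <= #|C|)%N) w #|C|.
  by apply: eq_bigr => C _; rewrite cweight_cst.
have z_neq0 : z != 0 by rewrite gt_eqF // zkp_gt0 // => i; rewrite ffunE.
transitivity
  (\sum_(C : {set 'I_n} | [set x in r] \subset C) w #|C| / (#|C| ^_ k)%:R / z).
  rewrite [RHS]big_mkcond; apply: eq_bigr => C _.
  rewrite PrPL_cst // cweight_cst.
  case: (boolP ([set x in r] \subset C)) => [sub|_]; last by rewrite mulr0.
  have le_kC : (k <= #|C|)%N by rewrite -cardS subset_leq_card.
  by rewrite le_kC mulrAC.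
rewrite -mulr_suml (sum_supset_div_ffact _ cardS) card_ord -zE.
by rewrite mulrAC divff ?mul1r.
Qed.

End UniformPLC.

Theorem theorem1 (R : realType) (n k : nat) :
  (1 <= n)%N -> (1 <= k)%N -> (k <= n)%N ->
  exists (u p p' : {ffun 'I_n -> R}),
    [/\ p != p',
        (forall i, 0 < p i <= 1),
        (forall i, 0 < p' i <= 1) &
        (forall r : k.-tuple 'I_n, uniq r ->
           PrPLC u p r = PrPLC u p' r)].
Proof.
move=> n_gt0 _ le_kn.
have one01 : 0 < (1 : R) <= 1 by rewrite ltr01 lexx.
have half01 : 0 < (2^-1 : R) <= 1 by rewrite invr_gt0 invf_le1 ?ler1n ?ltr0n.
exists [ffun=> 0], [ffun=> 1], [ffun=> 2^-1]; split=> [|i|i|r ur].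
- apply/eqP => /ffunP/(_ (Ordinal n_gt0)); rewrite !ffunE => /eqP.
  by rewrite eq_sym invr_eq1 pnatr_eq1.
- by rewrite ffunE.
- by rewrite ffunE.
- by rewrite !PrPLC_cst.
Qed.
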